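(* Let $\Gamma$ be a graph on $n$ vertices with at least $cn^2$ edges, where $c>0$. Then there exists a set $X$ of vertices with $|X|\ge 2^{-5}cn$ such that for any two vertices $x,y\in X$ there are at least $2^{-35}c^9n^5$ paths of length $6$ between $x$ and $y$.
   Context: A path of length 6 between $x$ and $y$ is a sequence of vertices $x=v_0,v_1,\dots,v_6=y$ in which each consecutive pair $v_{i-1}v_i$ is an edge (vertices need not be distinct); the count is of such sequences. *)

From mathcomp Require Import all_boot all_order all_algebra.
Set Implicit Arguments. Unset Strict Implicit. Unset Printing Implicit Defensive.
Import Order.TTheory GRing.Theory Num.Theory.

Definition simple_graph (T : finType) (e : rel T) : Prop :=
  symmetric e /\ irreflexive e.

Definition edges (T : finType) (e : rel T) : {set {set T}} :=
  [set E : {set T} | [exists x : T, exists y : T, e x y && (E == [set x; y])]].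

(* Number of walks (sequences v_0 = x, v_1, ..., v_k = y, consecutive
   vertices adjacent, vertices not necessarily distinct) of length k. *)
Definition nwalks (T : finType) (e : rel T) (k : nat) (x y : T) : nat :=
  #|[set w : {ffun 'I_k.+1 -> T} |
     [&& w ord0 == x, w ord_max == y &
         [forall i : 'I_k, e (w (widen_ord (leqnSn k) i)) (w (lift ord0 i))]]]|.

(* Dependent random choice.  Call a pair of vertices thin when it has fewer than
   K = c^2 n / 32 common neighbours.  Counting triples (v, a, b) with a, b in N(v)
   shows that the neighbourhoods contain at most n^2 K thin pairs in total, while
   Cauchy-Schwarz gives sum_v deg(v)^2 >= c^2 n^3; hence some neighbourhood S
   satisfies |S|^2 >= c^2 n^2 / 2 + 16 (number of thin pairs in S).  By Markov's
   inequality at least half of the vertices of S form thin pairs with at most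
   |S|/8 vertices of S; call these vertices X.  For x, y in X, all but a quarter of X is thick with x, resp.
   y, and discarding the thin pairs leaves 5|X|^2/16 pairs (a, b) with xa, ab, by
   thick, each the middle of at least K^3 walks x - a - b - y of length 6. *)

From mathcomp Require Import all_boot all_order all_algebra.
From mathcomp Require Import zify ring lra.
Set Implicit Arguments. Unset Strict Implicit. Unset Printing Implicit Defensive.
Import Order.TTheory GRing.Theory Num.Theory.

Lemma sum_nat_card (A : finType) (P : pred A) :
  \sum_a (P a : nat) = #|[set a | P a]|.
Proof. by rewrite -sum1dep_card [RHS]big_mkcond; apply: eq_bigr => a _; case: (P a). Qed.

Lemma sum_nat_card_in (A : finType) (S : {set A}) (P : pred A) :
  \sum_(a in S) (P a : nat) = #|[set a in S | P a]|.
Proof. by rewrite -sum1dep_card [RHS]big_mkcondr; apply: eq_bigr => a _; case: (P a). Qed.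

Lemma sum_pair (A B : finType) (F : A * B -> nat) :
  \sum_t F t = \sum_a \sum_b F (a, b).
Proof. by rewrite pair_big; apply: eq_bigr => -[]. Qed.

Lemma markov_card (A : finType) (S : {set A}) (w : A -> nat) (t : nat) :
  #|[set a in S | t < w a]| * t.+1 <= \sum_(a in S) w a.
Proof.
rewrite -sum_nat_card_in big_distrl /=; apply: leq_sum => a _.
by case: (ltnP t (w a)) => [lt_t|_]; rewrite ?mul1n.
Qed.

Section Codegree.

Variables (T : finType) (e : rel T).

Definition nbhd (v : T) : {set T} := [set u | e v u].

Definition codeg (a b : T) : nat := #|[set m | e a m && e m b]|.

Lemma codegE a b : codeg a b = \sum_m (e a m && e m b).
Proof. by rewrite sum_nat_card. Qed.

Lemma sum_deg_le : \sum_v #|nbhd v| <= #|T| ^ 2.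
Proof. by rewrite -mulnn -sum_nat_const; apply: leq_sum => v _; apply: max_card. Qed.

Lemma card_edges_le_sum_deg : #|edges e| <= \sum_v #|nbhd v|.
Proof.
pose ends (p : T * T) := [set p.1; p.2].
have sub : edges e \subset ends @: [set p | e p.1 p.2].
  apply/subsetP => E; rewrite inE => /existsP [x /existsP [y /andP [exy /eqP ->]]].
  by apply/imsetP; exists (x, y); rewrite ?inE.
apply: leq_trans (subset_leq_card sub) (leq_trans (leq_imset_card _ _) _).
rewrite -sum_nat_card sum_pair.
by apply: eq_leq; apply: eq_bigr => v _; exact: sum_nat_card.
Qed.

(* The walk is x p a q b r y; its even-position vertices a, b come first so that
   summing over the tuple factors as codeg x a * codeg a b * codeg b y. *)
Definition walk6_of (x y : T) (t : T * T * T * T * T) : {ffun 'I_7 -> T} :=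
  let: (a, b, p, q, r) := t in [ffun i : 'I_7 => nth x [:: x; p; a; q; b; r; y] i].

Lemma walk6_of_inj x y : injective (walk6_of x y).
Proof.
move=> [[[[a1 b1] p1] q1] r1] [[[[a2 b2] p2] q2] r2] /= eq_w.
have at_ k (lt_k7 : k < 7) := congr1 (fun f : {ffun 'I_7 -> T} => f (Ordinal lt_k7)) eq_w.
move: (at_ 1 isT) (at_ 2 isT) (at_ 3 isT) (at_ 4 isT) (at_ 5 isT).
by rewrite !ffunE /= => -> -> -> -> ->.
Qed.

Lemma sum_codeg3_le_nwalks6 x y :
  \sum_(p : T * T) codeg x p.1 * codeg p.1 p.2 * codeg p.2 y <= nwalks e 6 x y.
Proof.
pose walk5 (t : T * T * T * T * T) :=
  let: (a, b, p, q, r) := t in [&& e x p, e p a, e a q, e q b, e b r & e r y].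
have -> : \sum_(p : T * T) codeg x p.1 * codeg p.1 p.2 * codeg p.2 y = \sum_t (walk5 t : nat).
  rewrite !sum_pair; apply: eq_bigr => a _; apply: eq_bigr => b _.
  rewrite !codegE big_distrlr big_distrl /=; apply: eq_bigr => p _.
  rewrite big_distrl /=; apply: eq_bigr => q _; rewrite big_distrr /=; apply: eq_bigr => r _.
  by case: (e x p) (e p a) (e a q) (e q b) (e b r) (e r y) => [] [] [] [] [] [].
rewrite sum_nat_card -(card_imset _ (@walk6_of_inj x y)).
apply: subset_leq_card; apply/subsetP => _ /imsetP [[[[[a b] p] q] r] + ->].
rewrite !inE => /and5P [h1 h2 h3 h4 /andP [h5 h6]].
rewrite !ffunE /= !eqxx /=; apply/forallP => -[i lt_i6]; rewrite !ffunE.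
by case: i lt_i6 => [|[|[|[|[|[|i]]]]]].
Qed.

Hypothesis e_sym : symmetric e.

Lemma codegC a b : codeg a b = codeg b a.
Proof. by rewrite !codegE; apply: eq_bigr => m _; rewrite andbC (e_sym a) (e_sym m). Qed.

Lemma sum_nbhd_pairs (F : T -> T -> nat) :
  \sum_v \sum_(a in nbhd v) \sum_(b in nbhd v) F a b = \sum_a \sum_b F a b * codeg a b.
Proof.
transitivity (\sum_v \sum_a \sum_b (e v a && e v b) * F a b).
  apply: eq_bigr => v _; rewrite big_mkcond; apply: eq_bigr => a _.
  rewrite inE; case: (e v a) => /=; last by rewrite big1.
  rewrite big_mkcond; apply: eq_bigr => b _; rewrite inE.
  by case: (e v b); rewrite ?mul1n ?mul0n.
rewrite exchange_big; apply: eq_bigr => a _; rewrite exchange_big; apply: eq_bigr => b _.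
by rewrite codegE big_distrr /=; apply: eq_bigr => v _; rewrite (e_sym v a) mulnC.
Qed.

End Codegree.

Section Core.

Variables (T : finType) (bad : rel T) (S : {set T}).

Definition bad_nbrs (x : T) : {set T} := [set u in S | bad x u].

Definition bad_pairs : {set T * T} := [set p | [&& p.1 \in S, p.2 \in S & bad p.1 p.2]].

Definition core : {set T} := [set x in S | 8 * #|bad_nbrs x| <= #|S|].

Definition good_pairs (x y : T) : {set T * T} :=
  [set p | [&& p.1 \in core, p.2 \in core, ~~ bad x p.1, ~~ bad p.1 p.2 & ~~ bad y p.2]].

Lemma card_bad_pairs : #|bad_pairs| = \sum_(x in S) #|bad_nbrs x|.
Proof.
rewrite -sum_nat_card sum_pair [RHS]big_mkcond; apply: eq_bigr => a _ /=.
case: (boolP (a \in S)) => aS /=; last by rewrite big1.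
by rewrite -sum_nat_card_in [RHS]big_mkcond; apply: eq_bigr => b _ /=; case: (b \in S).
Qed.

Hypothesis few_bad_pairs : 16 * #|bad_pairs| <= #|S| ^ 2.

Lemma card_core : #|S| <= 2 * #|core|.
Proof.
pose heavy := [set x in S | #|S| < 8 * #|bad_nbrs x|].
have split_S : #|core| + #|heavy| = #|S|.
  rewrite -!sum_nat_card_in -big_split -sum1_card /=.
  by apply: eq_bigr => x _; rewrite ltnNge; case: leqP.
have := markov_card S (fun x => 8 * #|bad_nbrs x|) #|S|.
rewrite -big_distrr /= -card_bad_pairs -/heavy.
nia.
Qed.

Lemma card_core_good x : x \in core -> 3 * #|core| <= 4 * #|[set u in core | ~~ bad x u]|.
Proof.
rewrite inE => /andP [_ few_x].
have sub : core :\: [set u in core | ~~ bad x u] \subset bad_nbrs x.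
  apply/subsetP => u /setDP [u_core]; rewrite inE u_core negbK => bad_xu.
  by move: u_core; rewrite !inE bad_xu andbT => /andP [].
have := subset_leq_card sub; rewrite cardsD (setIidPr _).
  by have := card_core; nia.
by apply/subsetP => u /setIdP [].
Qed.

Lemma core_subset : {subset core <= S}.
Proof. by move=> x; rewrite inE => /andP []. Qed.

Lemma many_good_pairs x y :
  x \in core -> y \in core -> 5 * #|core| ^ 2 <= 16 * #|good_pairs x y|.
Proof.
move=> /card_core_good good_x /card_core_good good_y.
set Gx := [set u in core | ~~ bad x u] in good_x *.
set Gy := [set u in core | ~~ bad y u] in good_y *.
have cover : setX Gx Gy \subset good_pairs x y :|: bad_pairs.
  apply/subsetP => -[a b] /setXP [/setIdP [a_core good_xa] /setIdP [b_core good_yb]].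
  rewrite in_setU; case: (boolP (bad a b)) => bad_ab; apply/orP; [right | left].
    by rewrite [_ \in bad_pairs]inE /= bad_ab !core_subset.
  by rewrite [_ \in good_pairs _ _]inE /= a_core b_core good_xa bad_ab good_yb.
have := leq_trans (subset_leq_card cover) (leq_card_setU _ _); rewrite cardsX.
move: good_x good_y card_core few_bad_pairs; rewrite -mulnn.
move: #|core| #|Gx| #|Gy| #|S| #|bad_pairs| #|good_pairs x y| => k gx gy s b g.
move=> hx hy hs hb hg; have := leq_mul hx hy; have := leq_mul hs hs.
nia.
Qed.

End Core.

Local Open Scope ring_scope.

Lemma sum_sqr_ge (R : realDomainType) (I : finType) (F : I -> R) (t : R) :
  2 * t * \sum_i F i - #|I|%:R * t ^+ 2 <= \sum_i F i ^+ 2.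
Proof.
have tangent i : 2 * t * F i - t ^+ 2 <= F i ^+ 2.
  by have := sqr_ge0 (F i - t); rewrite sqrrB; lra.
apply: le_trans (ler_sum _ (fun i _ => tangent i)).
by rewrite sumrB -mulr_sumr sumr_const -[t ^+ 2 *+ _]mulr_natl.
Qed.

Lemma exists_ge_mean (R : realDomainType) (I : finType) (F : I -> R) (a : R) :
  (0 < #|I|)%N -> #|I|%:R * a <= \sum_i F i -> exists i, a <= F i.
Proof.
move=> /card_gt0P [i0 _] mean_ge; case: (pickP (fun i => a <= F i)) => [i|below]; first by exists i.
have : \sum_i F i < \sum_(i : I) a.
  apply: ltr_sum => [|i _]; first by apply/hasP; exists i0; rewrite ?mem_index_enum.
  by rewrite ltNge below.
by rewrite sumr_const -mulr_natl ltNge mean_ge.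
Qed.

Section DenseGraph.

Variables (R : realFieldType) (T : finType) (e : rel T).
Hypothesis e_sym : symmetric e.

Local Notation n := (#|T|%:R : R).

Definition thin (K : R) : rel T := fun a b => (codeg e a b)%:R < K.

Lemma sum_bad_pairs_nbhd_le (K : R) : 0 <= K ->
  \sum_v #|bad_pairs (thin K) (nbhd e v)|%:R <= n ^+ 2 * K.
Proof.
move=> K_ge0; rewrite -natr_sum.
have -> : (\sum_v #|bad_pairs (thin K) (nbhd e v)| =
           \sum_a \sum_b thin K a b * codeg e a b)%N.
  rewrite -sum_nbhd_pairs //; apply: eq_bigr => v _.
  by rewrite card_bad_pairs; apply: eq_bigr => a _; rewrite sum_nat_card_in.
have term_le a b : ((thin K a b) * codeg e a b)%:R <= K.
  by rewrite /thin; case: ltP => [/ltW|]; rewrite ?mul0n ?mul1n.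
rewrite natr_sum; under eq_bigr do rewrite natr_sum.
apply: le_trans (ler_sum _ (fun a _ => ler_sum _ (fun b _ => term_le a b))) _.
by rewrite !sumr_const -mulrnA -[K *+ _]mulr_natl natrM -expr2.
Qed.

Lemma nwalks6_ge_good_pairs (K : R) (S : {set T}) x y : 0 <= K ->
  #|good_pairs (thin K) S x y|%:R * K ^+ 3 <= (nwalks e 6 x y)%:R.
Proof.
move=> K_ge0; set P := good_pairs _ _ _ _.
have walks_P :
    (\sum_(p in P) codeg e x p.1 * codeg e p.1 p.2 * codeg e p.2 y <= nwalks e 6 x y)%N.
  apply: leq_trans (sum_codeg3_le_nwalks6 e x y).
  by rewrite [X in (X <= _)%N]big_mkcond; apply: leq_sum => p _; case: (p \in P).
have thick a b : ~~ thin K a b -> K <= (codeg e a b)%:R by rewrite /thin -leNgt.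
apply: le_trans (_ : (\sum_(p in P) K ^+ 3) <= _); first by rewrite sumr_const mulr_natl.
move: walks_P; rewrite -(ler_nat R) natr_sum; apply: le_trans; apply: ler_sum => p.
rewrite inE => /and5P [_ _ /thick K_xa /thick K_ab /thick K_yb].
rewrite !natrM exprS expr2 mulrA (codegC e_sym p.2).
by rewrite ler_pM ?mulr_ge0 // ler_pM.
Qed.

Variable c : R.
Hypotheses (c_ge0 : 0 <= c) (dense : c * n ^+ 2 <= (\sum_v #|nbhd e v|)%:R).

Local Notation K := (c ^+ 2 * n / 2%:R ^+ 5).

Let K_ge0 : 0 <= K.
Proof. by rewrite !(mulr_ge0, invr_ge0, exprn_ge0, ler0n). Qed.

Lemma exists_nbhd_few_bad_pairs : (0 < #|T|)%N ->
  exists v, c ^+ 2 * n ^+ 2 / 2 + 16 * #|bad_pairs (thin K) (nbhd e v)|%:R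
            <= #|nbhd e v|%:R ^+ 2.
Proof.
move=> T_gt0; have few_bad := sum_bad_pairs_nbhd_le K_ge0.
have sum_deg_ge : c * n ^+ 2 <= \sum_v #|nbhd e v|%:R by rewrite -natr_sum.
have sqr_deg := sum_sqr_ge (fun v => #|nbhd e v|%:R) (c * n).
have cn_ge0 : 0 <= c * n by rewrite mulr_ge0 ?ler0n.
have [v mean_v] : exists v, c ^+ 2 * n ^+ 2 / 2 <=
    #|nbhd e v|%:R ^+ 2 - 16 * #|bad_pairs (thin K) (nbhd e v)|%:R.
  apply: exists_ge_mean => //; rewrite sumrB -mulr_sumr.
  by have := ler_wpM2l cn_ge0 sum_deg_ge; lra.
by exists v; lra.
Qed.

Lemma exists_walk_rich_set : (0 < #|T|)%N ->
  exists X : {set T}, c ^+ 2 * n ^+ 2 <= 8 * #|X|%:R ^+ 2 /\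
    (forall x y, x \in X -> y \in X ->
       c ^+ 2 * n ^+ 2 / 2%:R ^+ 7 * K ^+ 3 <= (nwalks e 6 x y)%:R).
Proof.
move=> /exists_nbhd_few_bad_pairs [v]; set S := nbhd e v => few_v.
have bad_ge0 := ler0n R #|bad_pairs (thin K) S|.
have few_bad : (16 * #|bad_pairs (thin K) S| <= #|S| ^ 2)%N.
  rewrite -(ler_nat R) natrM natrX.
  have : 0 <= c ^+ 2 * n ^+ 2 / 2 by rewrite !(mulr_ge0, invr_ge0, exprn_ge0, ler0n).
  lra.
have core_large : c ^+ 2 * n ^+ 2 <= 8 * #|core (thin K) S|%:R ^+ 2.
  have := card_core few_bad; rewrite -(ler_nat R) natrM => S_le.
  by have := ler_pM (ler0n _ _) (ler0n _ _) S_le S_le; lra.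
exists (core (thin K) S); split => // x y x_core y_core.
apply: le_trans (nwalks6_ge_good_pairs S x y K_ge0); rewrite ler_wpM2r ?exprn_ge0 //.
have := many_good_pairs few_bad x_core y_core; rewrite -(ler_nat R) !natrM -expr2.
by have := sqr_ge0 (#|core (thin K) S|%:R : R); lra.
Qed.

End DenseGraph.

Theorem lemma2p2 (R : realFieldType) (T : finType) (e : rel T) (c : R) :
  simple_graph e -> 0 < c ->
  c * (#|T|%:R) ^+ 2 <= (#|edges e|)%:R ->
  exists X : {set T},
    c * #|T|%:R / 2%:R ^+ 5 <= (#|X|)%:R /\
    (forall x y, x \in X -> y \in X ->
       c ^+ 9 * (#|T|%:R) ^+ 5 / 2%:R ^+ 35 <= (nwalks e 6 x y)%:R).
Proof.
move=> [e_sym _] c_gt0 dense_edges; have c_ge0 := ltW c_gt0.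
have [T0 | T_gt0] := posnP #|T|.
  by exists set0; split=> [|x y]; rewrite ?inE // T0 mulr0 mul0r cards0.
have dense : c * #|T|%:R ^+ 2 <= (\sum_v #|nbhd e v|)%:R.
  by apply: le_trans dense_edges _; rewrite ler_nat card_edges_le_sum_deg.
have c_le1 : c <= 1.
  have deg_le : (\sum_v #|nbhd e v|)%:R <= #|T|%:R ^+ 2 :> R.
    by rewrite -natrX ler_nat sum_deg_le.
  by have := le_trans dense deg_le; rewrite ger_pMl // exprn_gt0 // ltr0n.
have [X [X_large X_walks]] := exists_walk_rich_set e_sym c_ge0 dense T_gt0.
exists X; split.
  rewrite -ler_sqr ?nnegrE ?ler0n ?mulr_ge0 ?invr_ge0 ?exprn_ge0 ?ler0n //.
  by have := sqr_ge0 (#|X|%:R : R); lra.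
move=> x y xX yX; apply: le_trans (X_walks x y xX yX).
have c_small : c / 2%:R ^+ 13 <= 1.
  rewrite ler_pdivrMr ?exprn_gt0 // mul1r.
  by apply: le_trans c_le1 (exprn_ege1 _ _); rewrite ler1n.
rewrite (_ : c ^+ 9 * _ / _ = c ^+ 2 * #|T|%:R ^+ 2 / 2%:R ^+ 7 *
          (c ^+ 2 * #|T|%:R / 2%:R ^+ 5) ^+ 3 * (c / 2%:R ^+ 13)); last by field.
by rewrite ler_piMr // !mulr_ge0 ?invr_ge0 ?exprn_ge0 ?ler0n.
Qed.
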